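(* Let $U\in\mathsf{U}(\mathcal{H}_A\otimes\mathcal{H}_B)$ and let $U=\sum_{i=1}^mc_iV_i\otimes W_i$ with $c_i>0$, $V_i\in\mathsf{U}(\mathcal{H}_A)$, $W_i\in\mathsf{U}(\mathcal{H}_B)$; set $\phi:=2\|c\|_1^2-\|c\|_2^2$. Let $E$ be an additional system, $X\in\mathsf{L}(\mathcal{H}_{ABE})$ a Hermitian observable, and $\rho\in\mathsf{D}(\mathcal{H}_{ABE})$. Run the random double Hadamard test circuit described in the context on $\rho$, and let $\boldsymbol{y}\in\mathrm{spec}(X)$ be the outcome of measuring $X$ on $ABE$ and $\boldsymbol{b}=\boldsymbol{b}_1\boldsymbol{b}_2\in\{0,1\}^2$ the outcome of measuring $R_AR_B$ in the computational basis. Then $\hat{\boldsymbol{\mu}}:=\phi\,(-1)^{\boldsymbol{g}+\boldsymbol{b}_1+\boldsymbol{b}_2}\boldsymbol{y}$ is an unbiased estimator of $\mu:=\mathrm{Tr}(XU_{AB}\rho_{ABE}U_{AB}^\dagger)$.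
   Context: Random setting: sample $(\boldsymbol{i},\boldsymbol{j},\boldsymbol{g})\in[m]^2\times\{0,1\}$ with probability $p(i,j,g)=0$ if $i=j$ and $g=1$, and $p(i,j,g)=c_ic_j/\phi$ otherwise. Given $(i,j,g)$, the circuit uses ancilla qubits $R_A,R_B$ initialized in $|0\rangle$: apply a Hadamard gate to each of $R_A,R_B$; if $g=1$ apply the phase gate $S=\mathrm{diag}(1,\mathrm{i})$ to each of $R_A,R_B$ (nothing if $g=0$); apply $|0\rangle\langle0|_{R_A}\otimes V_i+|1\rangle\langle1|_{R_A}\otimes V_j$ on $R_AA$ and $|0\rangle\langle0|_{R_B}\otimes W_i+|1\rangle\langle1|_{R_B}\otimes W_j$ on $R_BB$; apply a Hadamard gate to each of $R_A,R_B$; then measure $R_A,R_B$ in the computational basis and $ABE$ with respect to $X$ (identity acts on $E$ throughout). *)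

From HB Require Import structures.
From mathcomp Require Import all_boot all_order all_algebra all_field.
From mathcomp.real_closed Require Export mxtens.
Set Implicit Arguments. Unset Strict Implicit. Unset Printing Implicit Defensive.
Import Order.TTheory GRing.Theory Num.Theory.
Local Open Scope ring_scope.

Definition adjmx {m n} (A : 'M[algC]_(m, n)) : 'M[algC]_(n, m) :=
  map_mx (fun z => z^*) A^T.

Definition herm_mx {n} (A : 'M[algC]_n) : Prop := adjmx A = A.

Definition densitymx {n} (rho : 'M[algC]_n) : Prop :=
  (forall v : 'cV[algC]_n, 0 <= (adjmx v *m rho *m v) 0 0) /\ \tr rho = 1.

Definition projectormx {n} (P : 'M[algC]_n) : Prop :=
  herm_mx P /\ P *m P = P.

Definition spectral_decomp {n K} (X : 'M[algC]_n) (y : 'I_K -> algC)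
    (P : 'I_K -> 'M[algC]_n) : Prop :=
  [/\ (forall k, y k \is Num.real) /\ injective y,
      (forall k, projectormx (P k)),
      (forall k l, k != l -> P k *m P l = 0),
      \sum_k P k = 1%:M
    & X = \sum_k y k *: P k].

Definition ket_proj (a : bool) : 'M[algC]_2 := delta_mx (inord a) (inord a).
Definition hadamard : 'M[algC]_2 :=
  (sqrtC 2)^-1 *: \matrix_(i < 2, j < 2) ((-1) ^+ (i * j)).
Definition phase_gate : 'M[algC]_2 :=
  diag_mx (\row_(i < 2) (if i == 0 :> nat then 1 else 'i)).

Definition samp_prob {m} (c : 'I_m -> algC) (phi : algC) (i j : 'I_m) (g : bool)
  : algC := if (i == j) && g then 0 else c i * c j / phi.

(* The circuit on R_A R_B A B E, ordered as ((R_A (x) R_B) (x) ((A (x) B) (x) E)). *)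
Section Circuit.
Variables (dA dB dE : nat).
Local Notation N := (dA * dB * dE)%N.

Definition ctrlA (Vi Vj : 'M[algC]_dA) : 'M[algC]_(2 * 2 * N) :=
  \sum_(a : bool) (ket_proj a *t 1%:M) *t
     (((if a then Vj else Vi) *t (1%:M : 'M_dB)) *t (1%:M : 'M_dE)).

Definition ctrlB (Wi Wj : 'M[algC]_dB) : 'M[algC]_(2 * 2 * N) :=
  \sum_(b : bool) ((1%:M : 'M_2) *t ket_proj b) *t
     (((1%:M : 'M_dA) *t (if b then Wj else Wi)) *t (1%:M : 'M_dE)).

Definition had2 : 'M[algC]_(2 * 2 * N) := (hadamard *t hadamard) *t 1%:M.

Definition phase2 (g : bool) : 'M[algC]_(2 * 2 * N) :=
  if g then (phase_gate *t phase_gate) *t 1%:M else 1%:M.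

Definition circuit (Vi Vj : 'M[algC]_dA) (Wi Wj : 'M[algC]_dB) (g : bool) :=
  had2 *m ctrlB Wi Wj *m ctrlA Vi Vj *m phase2 g *m had2.

Definition circuit_out Vi Vj Wi Wj g (rho : 'M[algC]_N) : 'M[algC]_(2 * 2 * N) :=
  let C := circuit Vi Vj Wi Wj g in
  C *m ((ket_proj false *t ket_proj false) *t rho) *m adjmx C.

Definition outcome_prob Vi Vj Wi Wj g rho (b1 b2 : bool) (Pk : 'M[algC]_N) : algC :=
  \tr (((ket_proj b1 *t ket_proj b2) *t Pk) *m circuit_out Vi Vj Wi Wj g rho).
End Circuit.

From HB Require Import structures.
From mathcomp Require Import all_boot all_order all_algebra all_field.
From mathcomp.real_closed Require Import mxtens.
From mathcomp Require Import ring.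
Set Implicit Arguments. Unset Strict Implicit. Unset Printing Implicit Defensive.
Import Order.TTheory GRing.Theory Num.Theory.
Local Open Scope ring_scope.

(* Expanding the controlled unitaries, the circuit is the sum over the control
   values a, b of (M_g(a) ⊗ M_g(b)) ⊗ G(a,b), where M_g(a) = H |a><a| S^g H and
   G(a,b) applies V_i or V_j to A and W_i or W_j to B according to a and b.
   Weighting the readout b of an ancilla by (-1)^b keeps only the terms a ≠ a' of
   the resulting ket-bra double sum, with coefficient ±1/2 (g = 0) or ±i/2 (g = 1).
   Averaging over the phase g with sign (-1)^g cancels the terms mixing V_i and
   W_j and leaves (Tr X G_i ρ G_j† + Tr X G_j ρ G_i†)/2 with G_i = V_i ⊗ W_i ⊗ 1;
   the factor φ cancels the normalisation of p(i,j,g), and summing over i, j with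
   weights c_i c_j gives Tr X U ρ U†. *)

Section TensorProduct.
Variable R : pzRingType.

Lemma tensmx_suml m n p q I (r : seq I) (P : pred I) (F : I -> 'M[R]_(m, n))
    (B : 'M[R]_(p, q)) :
  (\sum_(i <- r | P i) F i) *t B = \sum_(i <- r | P i) F i *t B.
Proof.
apply/matrixP => x y; rewrite summxE mxE summxE big_distrl.
by apply: eq_bigr => i _; rewrite mxE.
Qed.

Lemma tensmx_sumr m n p q I (r : seq I) (P : pred I) (A : 'M[R]_(m, n))
    (F : I -> 'M[R]_(p, q)) :
  A *t (\sum_(i <- r | P i) F i) = \sum_(i <- r | P i) A *t F i.
Proof.
apply/matrixP => x y; rewrite summxE mxE summxE big_distrr.
by apply: eq_bigr => i _; rewrite mxE.
Qed.

Lemma tensmxZl m n p q a (A : 'M[R]_(m, n)) (B : 'M[R]_(p, q)) :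
  (a *: A) *t B = a *: (A *t B).
Proof. by apply/matrixP => x y; rewrite !mxE mulrA. Qed.

Lemma tensmx11 m n : (1%:M : 'M[R]_m) *t (1%:M : 'M[R]_n) = 1%:M.
Proof.
apply/matrixP => i j.
case: (mxtens_indexP i) => i1 i2; case: (mxtens_indexP j) => j1 j2.
rewrite tensmxE !mxE -natrM mulnb (inj_eq (can_inj (@mxtens_indexK _ _))).
by rewrite xpair_eqE.
Qed.

Lemma mxtrace_tens m n (A : 'M[R]_m) (B : 'M[R]_n) :
  \tr (A *t B) = \tr A * \tr B.
Proof.
rewrite /mxtrace (reindex (@mxtens_index m n)) /=; last first.
  by exists (@mxtens_unindex m n) => x _; [exact: mxtens_indexK | exact: mxtens_unindexK].
by rewrite big_distrlr pair_bigA; apply: eq_bigr => -[i j] _; rewrite tensmxE.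
Qed.

End TensorProduct.

Lemma tensmxZr (R : comPzRingType) m n p q a (A : 'M[R]_(m, n)) (B : 'M[R]_(p, q)) :
  A *t (a *: B) = a *: (A *t B).
Proof. by apply/matrixP => x y; rewrite !mxE mulrCA. Qed.

Lemma adjmxE m n (A : 'M[algC]_(m, n)) i j : adjmx A i j = (A j i)^*.
Proof. by rewrite !mxE. Qed.

Lemma adjmx_tens m n p q (A : 'M[algC]_(m, n)) (B : 'M[algC]_(p, q)) :
  adjmx (A *t B) = adjmx A *t adjmx B.
Proof. by rewrite /adjmx trmx_tens map_mxT. Qed.

Lemma adjmxZ m n a (A : 'M[algC]_(m, n)) : adjmx (a *: A) = a^* *: adjmx A.
Proof. by rewrite /adjmx linearZ map_mxZ. Qed.

Lemma adjmx_sum m n I (r : seq I) (P : pred I) (F : I -> 'M[algC]_(m, n)) :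
  adjmx (\sum_(i <- r | P i) F i) = \sum_(i <- r | P i) adjmx (F i).
Proof. by rewrite /adjmx !raddf_sum. Qed.

Lemma mxtrace_sandwich_sum n (I J : finType) (Q M : 'M[algC]_n)
    (A : I -> 'M[algC]_n) (B : J -> 'M[algC]_n) :
  \tr (Q *m (\sum_i A i) *m M *m adjmx (\sum_j B j)) =
  \sum_i \sum_j \tr (Q *m A i *m M *m adjmx (B j)).
Proof.
rewrite adjmx_sum [Q *m _]mulmx_sumr !mulmx_suml raddf_sum.
by apply: eq_bigr => i _; rewrite mulmx_sumr raddf_sum.
Qed.

Lemma mulmx_delta_sandwich (R : pzRingType) m n p (k : 'I_n) (A : 'M[R]_(m, n))
    (B : 'M[R]_(n, p)) i j :
  (A *m delta_mx k k *m B) i j = A i k * B k j.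
Proof.
by rewrite -(mul_delta_mx (0 : 'I_1)) mulmxA -colE -mulmxA -rowE mxE big_ord1 !mxE.
Qed.

Lemma mxtrace_delta_mul (R : comPzRingType) n (i j : 'I_n) (A B : 'M[R]_n) :
  \tr (delta_mx i i *m A *m delta_mx j j *m B) = A i j * B j i.
Proof.
rewrite -(mul_delta_mx (0 : 'I_1)) -!mulmxA mxtrace_mulC -!mulmxA -rowE mulmxA -colE.
by rewrite trace_mx11 mxE mulmx_delta_sandwich mxE.
Qed.

Definition phase_power (g : bool) : 'M[algC]_2 := if g then phase_gate else 1%:M.

Definition phase_factor (g a : bool) : algC := if g && a then 'i else 1.

Lemma ket_proj_phase g a : ket_proj a *m phase_power g = phase_factor g a *: ket_proj a.
Proof.
case: g; last by rewrite mulmx1 scale1r.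
rewrite /phase_power /phase_gate mul_mx_diag; apply/matrixP => r s; rewrite !mxE.
case: (s =P inord a) => [->|_]; last by rewrite andbF mul0r mulr0.
by rewrite inordK ?ltnS ?leq_b1 //; case: a => /=; rewrite mulrC.
Qed.

Lemma hadamardE (a b : bool) :
  hadamard (inord a) (inord b) = (sqrtC 2)^-1 * (-1) ^+ (a && b).
Proof. by rewrite !mxE !inordK ?ltnS ?leq_b1 // mulnb. Qed.

Definition hadamard_branch g a : 'M[algC]_2 :=
  hadamard *m ket_proj a *m phase_power g *m hadamard.

Lemma hadamard_branch_ket0 (g a b : bool) :
  hadamard_branch g a (inord b) (inord false) = phase_factor g a / 2 * (-1) ^+ (a && b).
Proof.
rewrite /hadamard_branch -(mulmxA hadamard) ket_proj_phase.
rewrite -(scalemxAr (phase_factor g a) hadamard) -(scalemxAl (phase_factor g a) _ hadamard) mxE.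
have half : (sqrtC 2)^-1 * (sqrtC 2)^-1 = 2^-1 :> algC.
  by rewrite -expr2 exprVn sqrtCK.
rewrite mulmx_delta_sandwich !hadamardE andbF andbC -half; ring.
Qed.

Definition readout g b a a' : algC :=
  \tr (ket_proj b *m hadamard_branch g a *m ket_proj false *m adjmx (hadamard_branch g a')).

Definition interference g a a' : algC :=
  if a == a' then 0 else phase_factor g a * (phase_factor g a')^* / 2.

Lemma sum_signed_readout (g a a' : bool) :
  \sum_(b : bool) (-1) ^+ b * readout g b a a' = interference g a a'.
Proof.
rewrite big_bool /= /readout /ket_proj !mxtrace_delta_mul !adjmxE !hadamard_branch_ket0.
rewrite /interference !rmorphM !rmorph_sign !fmorphV !rmorph_nat.
by case: a; case: a' => /=; field.
Qed.

Lemma interference_flip (g a b : bool) :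
  (-1) ^+ g * (interference g a (~~ a) * interference g b (~~ b)) =
  (-1) ^+ (g && (a != b)) / 4.
Proof.
have ii : 'i * 'i = -1 :> algC by rewrite -expr2 sqrCi.
rewrite /interference !ifN; [|by case: b|by case: a].
rewrite mulrACA /phase_factor; case: g; case: a; case: b => /=;
  by rewrite ?conjCi ?rmorph1 ?mulr1 ?mul1r ?mulrN ?mulNr ?ii; field.
Qed.

Lemma sum_interference g a b (F : bool * bool -> algC) :
  \sum_(p : bool * bool) interference g a p.1 * interference g b p.2 * F p =
  interference g a (~~ a) * interference g b (~~ b) * F (~~ a, ~~ b).
Proof.
rewrite (bigD1 (~~ a, ~~ b)) //= big1 ?addr0 // => -[a' b'].
rewrite xpair_eqE /interference.
by case: a; case: a'; case: b; case: b' => //= _; rewrite ?(mul0r, mulr0).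
Qed.

Lemma exchange_big2 (R : nmodType) (I J K L : finType) (F : I -> J -> K -> L -> R) :
  \sum_i \sum_j \sum_k \sum_l F i j k l = \sum_k \sum_l \sum_i \sum_j F i j k l.
Proof.
rewrite pair_bigA [RHS]pair_bigA; under eq_bigr => p _ do rewrite pair_bigA.
by rewrite exchange_big; apply: eq_bigr => q _; rewrite pair_bigA.
Qed.

Section Circuit.
Variables (dA dB dE : nat) (Vi Vj : 'M[algC]_dA) (Wi Wj : 'M[algC]_dB).
Local Notation N := (dA * dB * dE)%N.

Definition branch (ab : bool * bool) : 'M[algC]_N :=
  ((if ab.1 then Vj else Vi) *t (if ab.2 then Wj else Wi)) *t 1%:M.

Lemma ctrlB_mul_ctrlA :
  ctrlB dA dE Wi Wj *m ctrlA dB dE Vi Vj =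
  \sum_(ab : bool * bool) (ket_proj ab.1 *t ket_proj ab.2) *t branch ab.
Proof.
rewrite /ctrlB /ctrlA mulmx_suml; under eq_bigr => b _ do rewrite mulmx_sumr.
rewrite exchange_big pair_bigA; apply: eq_bigr => -[a b] _ /=.
by rewrite !tensmx_mul !mul1mx !mulmx1.
Qed.

Lemma circuitE g :
  circuit dE Vi Vj Wi Wj g =
  \sum_(ab : bool * bool) (hadamard_branch g ab.1 *t hadamard_branch g ab.2) *t branch ab.
Proof.
have phase2E : phase2 dA dB dE g = (phase_power g *t phase_power g) *t 1%:M.
  by case: g; rewrite /phase2 ?tensmx11.
rewrite /circuit -(mulmxA (had2 _ _ _)) ctrlB_mul_ctrlA phase2E /had2.
rewrite mulmx_sumr !mulmx_suml; apply: eq_bigr => ab _.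
by rewrite !tensmx_mul !mul1mx !mulmx1.
Qed.

Definition cross_term (Q rho : 'M[algC]_N) (p p' : bool * bool) : algC :=
  \tr (Q *m branch p *m rho *m adjmx (branch p')).

Lemma outcome_probE g rho b1 b2 Q :
  outcome_prob Vi Vj Wi Wj g rho b1 b2 Q =
  \sum_p \sum_p' readout g b1 p.1 p'.1 * readout g b2 p.2 p'.2 * cross_term Q rho p p'.
Proof.
rewrite /outcome_prob /circuit_out /= circuitE !mulmxA mxtrace_sandwich_sum.
apply: eq_bigr => p _; apply: eq_bigr => p' _.
by rewrite adjmx_tens [adjmx (_ *t hadamard_branch _ _)]adjmx_tens !tensmx_mul !mxtrace_tens.
Qed.

Lemma outcome_prob_linear g rho b1 b2 K (y : 'I_K -> algC) (P : 'I_K -> 'M[algC]_N) :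
  outcome_prob Vi Vj Wi Wj g rho b1 b2 (\sum_k y k *: P k) =
  \sum_k y k * outcome_prob Vi Vj Wi Wj g rho b1 b2 (P k).
Proof.
rewrite /outcome_prob tensmx_sumr mulmx_suml linear_sum; apply: eq_bigr => k _.
by rewrite tensmxZr -scalemxAl linearZ.
Qed.

Lemma signed_outcome_prob g rho Q :
  \sum_(b1 : bool) \sum_(b2 : bool)
     (-1) ^+ (b1 + b2) * outcome_prob Vi Vj Wi Wj g rho b1 b2 Q =
  \sum_p \sum_p' interference g p.1 p'.1 * interference g p.2 p'.2 *
                   cross_term Q rho p p'.
Proof.
under eq_bigr => b1 _ do under eq_bigr => b2 _
  do (rewrite outcome_probE mulr_sumr; under eq_bigr do rewrite mulr_sumr).
under [RHS]eq_bigr => p _ do under eq_bigr => p' _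
  do (rewrite -!sum_signed_readout big_distrlr mulr_suml;
      under eq_bigr do rewrite mulr_suml).
rewrite exchange_big2; do 4 (apply: eq_bigr => ? _); rewrite /= exprD; ring.
Qed.

Lemma signed_outcome_flip (g : bool) rho Q :
  (-1) ^+ g * \sum_(b1 : bool) \sum_(b2 : bool)
     (-1) ^+ (b1 + b2) * outcome_prob Vi Vj Wi Wj g rho b1 b2 Q =
  4^-1 * \sum_p (-1) ^+ (g && (p.1 != p.2)) * cross_term Q rho p (~~ p.1, ~~ p.2).
Proof.
rewrite signed_outcome_prob !mulr_sumr; apply: eq_bigr => p _.
by rewrite sum_interference mulrA interference_flip mulrAC mulrC.
Qed.

End Circuit.

Lemma sum_bool_pair (R : nmodType) (F : bool * bool -> R) :
  \sum_p F p = \sum_(a : bool) \sum_(b : bool) F (a, b).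
Proof. by rewrite [RHS]pair_bigA; apply: eq_bigr => -[]. Qed.

Lemma sum_phase_sign (R : comPzRingType) (F : bool * bool -> R) :
  \sum_(g : bool) \sum_p (-1) ^+ (g && (p.1 != p.2)) * F p =
  (F (false, false) + F (true, true)) *+ 2.
Proof. rewrite big_bool !sum_bool_pair !big_bool /=; ring. Qed.

Lemma sum_samp_prob m (c : 'I_m -> algC) phi i j (F : bool -> algC) :
  (i = j -> F true = 0) ->
  \sum_g samp_prob c phi i j g * F g = c i * c j / phi * \sum_g F g.
Proof.
move=> F_diag; rewrite !big_bool /samp_prob /= andbT andbF mulrDr.
by case: eqP => [/F_diag ->|_]; rewrite ?mulr0 ?mul0r.
Qed.

Lemma sum_sqr_le_sqr_sum (R : numDomainType) (I : finType) (c : I -> R) :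
  (forall i, 0 <= c i) -> \sum_i c i ^+ 2 <= (\sum_i c i) ^+ 2.
Proof.
move=> c_ge0; rewrite [in leRHS]expr2 mulr_suml; apply: ler_sum => i _.
rewrite expr2 ler_wpM2l // (bigD1 i) //= lerDl.
by apply: sumr_ge0 => j _.
Qed.

Lemma estimator_scale_gt0 (R : numDomainType) (I : finType) (c : I -> R) (i0 : I) :
  (forall i, 0 < c i) -> 0 < 2 * (\sum_i c i) ^+ 2 - \sum_i c i ^+ 2.
Proof.
move=> c_gt0; have c_ge0 i : 0 <= c i by exact: ltW.
have sum_gt0 : 0 < \sum_i c i.
  by rewrite (bigD1 i0) //= ltr_wpDr // sumr_ge0.
rewrite mulr_natl mulr2n -addrA ltr_wpDr ?exprn_gt0 //.
by rewrite subr_ge0 sum_sqr_le_sqr_sum.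
Qed.

Lemma sum_symmetrize (R : numFieldType) (I : finType) (c : I -> R) (T : I -> I -> R) :
  \sum_i \sum_j c i * c j / 2 * (T i j + T j i) = \sum_i \sum_j c i * c j * T i j.
Proof.
transitivity (2^-1 * (\sum_i \sum_j c i * c j * T i j + \sum_i \sum_j c i * c j * T j i)).
  rewrite -big_split mulr_sumr; apply: eq_bigr => i _.
  rewrite -big_split mulr_sumr; apply: eq_bigr => j _ /=; ring.
rewrite [X in _ + X]exchange_big /=.
under [X in _ + X]eq_bigr => j _ do under eq_bigr => i _ do rewrite (mulrC (c i)).
by field.
Qed.

Lemma mxtrace_sandwichZ n a b (Q A M B : 'M[algC]_n) :
  \tr (Q *m (a *: A) *m M *m adjmx (b *: B)) = a * b^* * \tr (Q *m A *m M *m adjmx B).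
Proof.
by rewrite adjmxZ -!scalemxAr -!scalemxAl !mxtraceZ mulrCA mulrA.
Qed.

Section Estimator.
Variables (dA dB dE m K : nat) (c : 'I_m -> algC).
Variables (V : 'I_m -> 'M[algC]_dA) (W : 'I_m -> 'M[algC]_dB).
Variables (X rho : 'M[algC]_(dA * dB * dE)).
Variables (y : 'I_K -> algC) (P : 'I_K -> 'M[algC]_(dA * dB * dE)).
Hypothesis X_def : X = \sum_k y k *: P k.
Hypothesis c_gt0 : forall i, 0 < c i.

Let phi := 2 * (\sum_i c i) ^+ 2 - \sum_i c i ^+ 2.
Let G i : 'M[algC]_(dA * dB * dE) := (V i *t W i) *t 1%:M.
Let corr i j := \tr (X *m G i *m rho *m adjmx (G j)).

Lemma estimate_given_sample i j g :
  \sum_(b1 : bool) \sum_(b2 : bool) \sum_(k < K)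
     outcome_prob (V i) (V j) (W i) (W j) g rho b1 b2 (P k) *
     (phi * (-1) ^+ (g + b1 + b2)%N * y k) =
  phi / 4 * \sum_p (-1) ^+ (g && (p.1 != p.2)) *
              cross_term (V i) (V j) (W i) (W j) X rho p (~~ p.1, ~~ p.2).
Proof.
rewrite -[RHS]mulrA -signed_outcome_flip mulrA mulr_sumr; apply: eq_bigr => b1 _.
rewrite mulr_sumr; apply: eq_bigr => b2 _.
rewrite X_def outcome_prob_linear !mulr_sumr; apply: eq_bigr => k _.
by rewrite -addnA !exprD; ring.
Qed.

Lemma estimate_pair_mean i j :
  \sum_(g : bool) samp_prob c phi i j g *
     \sum_(b1 : bool) \sum_(b2 : bool) \sum_(k < K)
        outcome_prob (V i) (V j) (W i) (W j) g rho b1 b2 (P k) *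
        (phi * (-1) ^+ (g + b1 + b2)%N * y k) =
  c i * c j / 2 * (corr i j + corr j i).
Proof.
have phi_neq0 : phi != 0 by rewrite lt0r_neq0 // (estimator_scale_gt0 i).
under eq_bigr => g _ do rewrite estimate_given_sample.
rewrite sum_samp_prob; last first.
  (* for i = j all four branches coincide and the g = 1 sign average is 0 *)
  move=> <-; rewrite sum_bool_pair !big_bool /=; ring.
rewrite -mulr_sumr sum_phase_sign /corr /cross_term /branch /=.
by field.
Qed.

Lemma estimator_mean :
  \sum_(i < m) \sum_(j < m) \sum_(g : bool) samp_prob c phi i j g *
     \sum_(b1 : bool) \sum_(b2 : bool) \sum_(k < K)
        outcome_prob (V i) (V j) (W i) (W j) g rho b1 b2 (P k) *
        (phi * (-1) ^+ (g + b1 + b2)%N * y k) =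
  \sum_i \sum_j c i * c j * corr i j.
Proof.
rewrite -sum_symmetrize; apply: eq_bigr => i _; apply: eq_bigr => j _.
exact: estimate_pair_mean.
Qed.

End Estimator.

Theorem lemma5 (dA dB dE m K : nat)
  (U : 'M[algC]_(dA * dB)) (c : 'I_m -> algC)
  (V : 'I_m -> 'M[algC]_dA) (W : 'I_m -> 'M[algC]_dB)
  (X : 'M[algC]_(dA * dB * dE)) (y : 'I_K -> algC)
  (P : 'I_K -> 'M[algC]_(dA * dB * dE)) (rho : 'M[algC]_(dA * dB * dE)) :
  U \is unitarymx ->
  (forall i, 0 < c i) ->
  (forall i, V i \is unitarymx) ->
  (forall i, W i \is unitarymx) ->
  U = \sum_i c i *: (V i *t W i) ->
  herm_mx X ->
  spectral_decomp X y P ->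
  densitymx rho ->
  let phi := 2 * (\sum_i c i) ^+ 2 - \sum_i c i ^+ 2 in
  \sum_(i < m) \sum_(j < m) \sum_(g : bool)
     samp_prob c phi i j g *
     \sum_(b1 : bool) \sum_(b2 : bool) \sum_(k < K)
        outcome_prob (V i) (V j) (W i) (W j) g rho b1 b2 (P k) *
        (phi * (-1) ^+ (g + b1 + b2)%N * y k)
  = \tr (X *m (U *t (1%:M : 'M_dE)) *m rho *m adjmx (U *t (1%:M : 'M_dE))).
Proof.
move=> _ c_gt0 _ _ U_def _ [_ _ _ _ X_def] _ phi.
rewrite (estimator_mean V W rho X_def c_gt0) U_def tensmx_suml mxtrace_sandwich_sum.
apply: eq_bigr => i _; apply: eq_bigr => j _.
by rewrite !tensmxZl mxtrace_sandwichZ geC0_conj ?ltW.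
Qed.
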